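(* Let $\rho\in(0,1)$, $\xi\in\mathbb{R}$, and $H=\frac{1}{2(1-\rho\cos x)}\big(\sin^2x\,(P_x^2+P_y^2)+\xi\big)$ on $(x,y)\in(0,\pi)\times\mathbb{R}$. Consider the trajectories (''geodesics'') of the Hamiltonian flow of $H$ on the level set $H=0$, $P_y=1$, projected to the $(x,y)$-plane, each normalized by a translation in $y$. Then: (a) if $-1<\xi<0$, they are given by $\cosh y=\frac{\cos x}{\cos x_*}$ for $x\in(0,x_* )$ and by $\cosh y=\frac{\cos(\pi-x)}{\cos x_*}$ for $x\in(\pi-x_*,\pi)$; (b) if $\xi<-1$, they are given by $\epsilon\sinh y_\epsilon=\frac{\cos x}{\sinh\theta}$, $x\in(0,\pi)$, $\epsilon=\pm1$; (c) if $\xi=-1$, they are given by $e^{\epsilon y_\epsilon}=|\cos x|$, $x\in(0,\pi/2)\cup(\pi/2,\pi)$, $\epsilon=\pm1$; where $\sinh\theta=\sqrt{|\xi|-1}$ and $\cos x_*=\sqrt{1-|\xi|}$, and $y_\epsilon$ denotes the trajectory along which the sign of $P_x$ (equivalently of $\dot x$) is $\epsilon$.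
   Context: Trajectories are solutions of Hamilton's equations of $H$; the invariance of $H$ under $y\mapsto y+c$ allows normalizing $y$ (e.g. $y=0$ at the turning point $x=x_*$ in (a), at $x=\pi/2$ in (b), at $x\to0$ in (c)). *)

From Stdlib Require Import Reals.
From Coquelicot Require Import Coquelicot.
Open Scope R_scope.

Definition Ham (rho xi : R) (x y px py : R) : R :=
  (sin x ^ 2 * (px ^ 2 + py ^ 2) + xi) / (2 * (1 - rho * cos x)).

Definition open_interval (I : R -> Prop) : Prop :=
  (forall t, I t -> exists eps : posreal,
       forall s, Rabs (s - t) < eps -> I s) /\
  (forall a b t, I a -> I b -> a <= t <= b -> I t).

Definition trajectory (rho xi : R) (I : R -> Prop)
    (x y px py : R -> R) : Prop :=
  open_interval I /\
  forall t, I t ->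
    0 < x t < PI /\
    is_derive x t (Derive (fun p => Ham rho xi (x t) (y t) p (py t)) (px t)) /\
    is_derive y t (Derive (fun p => Ham rho xi (x t) (y t) (px t) p) (py t)) /\
    is_derive px t (- Derive (fun q => Ham rho xi q (y t) (px t) (py t)) (x t)) /\
    is_derive py t (- Derive (fun q => Ham rho xi (x t) q (px t) (py t)) (y t)) /\
    Ham rho xi (x t) (y t) (px t) (py t) = 0 /\
    py t = 1.

Definition xstar (xi : R) : R := acos (sqrt (1 - Rabs xi)).
Definition sinh_theta (xi : R) : R := sqrt (Rabs xi - 1).

(** Along a trajectory the two quantities
    [W = exp (- y) (cos x - sin x P_x)] and [V = exp y (cos x + sin x P_x)]
    are first integrals, and on the level set [H = 0, P_y = 1] their product is
    [cos^2 x - sin^2 x P_x^2 = 1 + xi].  Hence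
    [2 cos x = W exp y + V exp (- y)] and [2 sin x P_x = V exp (- y) - W exp y]
    with constants [W], [V].  Writing [W = ± k exp (- c)] with [k^2 = |1 + xi|]
    turns these into [cos x = ± k cosh (y - c)] when [1 + xi > 0] and
    [cos x = ± k sinh (y - c)] when [1 + xi < 0]; when [1 + xi = 0] one of [W], [V]
    vanishes and [|cos x|] is a single exponential in [y]. *)

From Stdlib Require Import Reals Lra Classical_Prop.
From Coquelicot Require Import Coquelicot.
Open Scope R_scope.

Lemma Ham_denom_pos rho q : 0 < rho < 1 -> 0 < 1 - rho * cos q.
Proof. intros Hrho. pose proof (COS_bound q). nra. Qed.

Lemma Derive_Ham_px rho xi a b p d : 0 < rho < 1 ->
  Derive (fun p => Ham rho xi a b p d) p = sin a ^ 2 * p / (1 - rho * cos a).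
Proof.
  intros Hrho. pose proof (Ham_denom_pos rho a Hrho).
  apply is_derive_unique. unfold Ham. auto_derive; [lra | field; lra].
Qed.

Lemma Derive_Ham_py rho xi a b p d : 0 < rho < 1 ->
  Derive (fun d => Ham rho xi a b p d) d = sin a ^ 2 * d / (1 - rho * cos a).
Proof.
  intros Hrho. pose proof (Ham_denom_pos rho a Hrho).
  apply is_derive_unique. unfold Ham. auto_derive; [lra | field; lra].
Qed.

(* Off the level set the derivative has an extra term proportional to [H]. *)
Lemma Derive_Ham_x_level rho xi a b p d : 0 < rho < 1 ->
  Ham rho xi a b p d = 0 ->
  Derive (fun a => Ham rho xi a b p d) a
  = sin a * cos a * (p ^ 2 + d ^ 2) / (1 - rho * cos a).
Proof.
  intros Hrho H0. pose proof (Ham_denom_pos rho a Hrho).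
  assert (Hxi : xi = - (sin a ^ 2 * (p ^ 2 + d ^ 2))).
  { unfold Ham in H0. apply Rmult_eq_reg_r with (/ (2 * (1 - rho * cos a))).
    - unfold Rdiv in H0. lra.
    - apply Rinv_neq_0_compat. lra. }
  apply is_derive_unique. unfold Ham. auto_derive; [lra |].
  rewrite Hxi. field. lra.
Qed.

Lemma Ham_level_py1 rho xi a b p : 0 < rho < 1 ->
  Ham rho xi a b p 1 = 0 -> sin a ^ 2 * (p ^ 2 + 1) + xi = 0.
Proof.
  intros Hrho H0. pose proof (Ham_denom_pos rho a Hrho).
  unfold Ham in H0. apply Rmult_eq_reg_r with (/ (2 * (1 - rho * cos a))).
  - unfold Rdiv in H0. rewrite Rmult_0_l, <- H0. ring.
  - apply Rinv_neq_0_compat. lra.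
Qed.

Lemma constant_on_convex (I : R -> Prop) (f : R -> R) :
  (forall a b t, I a -> I b -> a <= t <= b -> I t) ->
  (forall t, I t -> is_derive f t 0) -> forall a b, I a -> I b -> f a = f b.
Proof.
  intros Hconv Hd.
  assert (Hlt : forall a b, I a -> I b -> a < b -> f a = f b).
  { intros a b Ha Hb Hab. apply eq_is_derive; [|exact Hab].
    intros t Ht. exact (Hd t (Hconv a b t Ha Hb Ht)). }
  intros a b Ha Hb. destruct (Rtotal_order a b) as [H | [-> | H]]; auto.
  symmetry; auto.
Qed.

(* [first_integral (-1)] and [first_integral 1] are the quantities [W] and [V]. *)
Definition first_integral (s : R) (x y px : R -> R) (t : R) : R :=
  exp (s * y t) * (cos (x t) + s * sin (x t) * px t).

Section Trajectory.

Variables (rho xi : R) (I : R -> Prop) (x y px py : R -> R).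
Hypothesis Hrho : 0 < rho < 1.
Hypothesis Htraj : trajectory rho xi I x y px py.

Let D t := 1 - rho * cos (x t).

Lemma trajectory_odes t : I t ->
  0 < x t < PI /\
  is_derive x t (sin (x t) ^ 2 * px t / D t) /\
  is_derive y t (sin (x t) ^ 2 / D t) /\
  is_derive px t (- (sin (x t) * cos (x t) * (px t ^ 2 + 1) / D t)) /\
  sin (x t) ^ 2 * (px t ^ 2 + 1) + xi = 0.
Proof.
  intros It. destruct Htraj as [_ Hsol].
  destruct (Hsol t It) as (Hx0 & Hx & Hy & Hp & _ & H0 & Hpy).
  pose proof (Ham_denom_pos rho (x t) Hrho).
  rewrite Derive_Ham_px in Hx by exact Hrho.
  rewrite Derive_Ham_py, Hpy in Hy by exact Hrho.
  rewrite Derive_Ham_x_level, Hpy in Hp by assumption.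
  rewrite Hpy in H0. unfold D.
  split; [exact Hx0 |]. split; [exact Hx |]. split; [| split].
  - replace (sin (x t) ^ 2 / (1 - rho * cos (x t)))
      with (sin (x t) ^ 2 * 1 / (1 - rho * cos (x t))) by (field; lra).
    exact Hy.
  - replace (px t ^ 2 + 1) with (px t ^ 2 + 1 ^ 2) by ring. exact Hp.
  - exact (Ham_level_py1 rho xi (x t) (y t) (px t) Hrho H0).
Qed.

(* The derivative of [first_integral s] is [(s^2 - 1) exp (s y) sin^3 x P_x / D]. *)
Lemma first_integral_derive s t : s * s = 1 -> I t ->
  is_derive (first_integral s x y px) t 0.
Proof.
  intros Hs It. destruct (trajectory_odes t It) as (_ & Hx & Hy & Hp & _).
  assert (HD : 0 < D t) by exact (Ham_denom_pos rho (x t) Hrho).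
  unfold first_integral. auto_derive.
  { repeat split; eexists; eassumption. }
  change (fun z => x z) with x. change (fun z => y z) with y.
  change (fun z => px z) with px.
  rewrite (is_derive_unique _ _ _ Hx), (is_derive_unique _ _ _ Hy),
    (is_derive_unique _ _ _ Hp).
  transitivity ((s * s - 1) * (exp (s * y t) * sin (x t) ^ 3 * px t / D t)).
  - field. lra.
  - rewrite Hs. ring.
Qed.

Lemma first_integral_const s a b : s * s = 1 -> I a -> I b ->
  first_integral s x y px a = first_integral s x y px b.
Proof.
  intros Hs. apply constant_on_convex; [exact (proj2 (proj1 Htraj)) |].
  intros t. exact (first_integral_derive s t Hs).
Qed.

Lemma first_integral_product t : I t ->
  first_integral (-1) x y px t * first_integral 1 x y px t = 1 + xi.
Proof.
  intros It. destruct (trajectory_odes t It) as (_ & _ & _ & _ & Hlevel).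
  pose proof (sin2_cos2 (x t)) as Hpyth. unfold Rsqr in Hpyth.
  unfold first_integral.
  replace (exp (-1 * y t)) with (/ exp (y t))
    by (rewrite <- exp_Ropp; f_equal; ring).
  rewrite Rmult_1_l. pose proof (exp_pos (y t)).
  transitivity (cos (x t) ^ 2 - sin (x t) ^ 2 * px t ^ 2); [field; lra | nra].
Qed.

Lemma trajectory_invariants : exists W V, W * V = 1 + xi /\
  forall t, I t -> 0 < x t < PI /\
    2 * cos (x t) = W * exp (y t) + V * exp (- y t) /\
    2 * (sin (x t) * px t) = V * exp (- y t) - W * exp (y t).
Proof.
  destruct (classic (exists t0, I t0)) as [[t0 It0] | Hempty].
  2: { exists 1, (1 + xi). split; [ring |]. intros t It. exfalso. eauto. }
  exists (first_integral (-1) x y px t0), (first_integral 1 x y px t0).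
  split; [exact (first_integral_product t0 It0) |].
  intros t It.
  rewrite (first_integral_const (-1) t0 t), (first_integral_const 1 t0 t)
    by (lra || assumption).
  split; [exact (proj1 (trajectory_odes t It)) |].
  unfold first_integral.
  replace (exp (-1 * y t)) with (/ exp (y t))
    by (rewrite <- exp_Ropp; f_equal; ring).
  rewrite Rmult_1_l, exp_Ropp. pose proof (exp_pos (y t)).
  split; field; lra.
Qed.

End Trajectory.

Lemma cosh_ge_1 u : 1 <= cosh u.
Proof.
  unfold cosh. rewrite exp_Ropp. pose proof (exp_pos u) as Hpos.
  assert (Hsq : exp u + / exp u - 2 = (exp u - 1) ^ 2 / exp u) by (field; lra).
  assert (0 <= (exp u - 1) ^ 2 / exp u).
  { apply Rdiv_le_0_compat; [apply pow2_ge_0 | exact Hpos]. }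
  lra.
Qed.

Lemma exp_shift_combination sg k c u :
  sg * k * exp (- c) * exp u + sg * k * exp c * exp (- u)
  = 2 * sg * k * cosh (u - c) /\
  sg * k * exp (- c) * exp u - sg * k * exp c * exp (- u)
  = 2 * sg * k * sinh (u - c).
Proof.
  unfold cosh, sinh.
  replace (exp (u - c)) with (exp (- c) * exp u)
    by (rewrite <- exp_plus; f_equal; ring).
  replace (exp (- (u - c))) with (exp c * exp (- u))
    by (rewrite <- exp_plus; f_equal; ring).
  split; field.
Qed.

Lemma factor_pair W V s k : 0 < k -> W <> 0 -> W * V = s * (k * k) ->
  exists sg c, (sg = 1 \/ sg = -1) /\
    W = sg * k * exp (- c) /\ V = s * sg * k * exp c.
Proof.
  intros Hk HW HWV.
  assert (HV : V = s * (k * k) / W) by (rewrite <- HWV; field; exact HW).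
  destruct (Rlt_or_le 0 W) as [Hpos | Hneg].
  - exists 1, (ln (k / W)).
    rewrite exp_Ropp, exp_ln by (apply Rdiv_lt_0_compat; lra).
    split; [left; reflexivity | split; [field | rewrite HV; field]; lra].
  - exists (-1), (ln (k / - W)).
    rewrite exp_Ropp, exp_ln by (apply Rdiv_lt_0_compat; lra).
    split; [right; reflexivity | split; [field | rewrite HV; field]; lra].
Qed.

Lemma le_of_cos_le a b : 0 <= a <= PI -> 0 <= b <= PI -> cos b <= cos a -> a <= b.
Proof.
  intros Ha Hb Hcos. apply Rnot_lt_le. intros Hlt.
  pose proof (cos_decreasing_1 b a (proj1 Hb) (proj2 Hb) (proj1 Ha) (proj2 Ha) Hlt).
  lra.
Qed.

Lemma exp_orbit_point eps sg u X P : 0 < X < PI -> eps * eps = 1 ->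
  (sg = 1 \/ sg = -1) -> cos X = sg * exp u -> sin X * P = - eps * cos X ->
  X <> PI / 2 /\ eps * P * cos X < 0 /\ exp u = Rabs (cos X).
Proof.
  intros HX Heps Hsg Hcos HsinP.
  assert (Hs : 0 < sin X) by (apply sin_gt_0; lra).
  assert (Hc : cos X <> 0).
  { rewrite Hcos. pose proof (exp_pos u). destruct Hsg; subst; lra. }
  split; [| split].
  - intros ->. exact (Hc cos_PI2).
  - assert (0 < cos X * cos X) by (apply Rsqr_pos_lt; exact Hc).
    assert (sin X * (eps * P * cos X) < 0) by nra.
    nra.
  - rewrite Hcos, Rabs_mult, (Rabs_pos_eq (exp u)) by (left; apply exp_pos).
    destruct Hsg as [-> | ->]; rewrite ?Rabs_R1, ?Rabs_m1; ring.
Qed.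

Section Orbits.

Variables (xi W V : R) (I : R -> Prop) (x y px : R -> R).
Hypothesis HWV : W * V = 1 + xi.
Hypothesis Hinv : forall t, I t -> 0 < x t < PI /\
  2 * cos (x t) = W * exp (y t) + V * exp (- y t) /\
  2 * (sin (x t) * px t) = V * exp (- y t) - W * exp (y t).

Lemma cosh_orbit : -1 < xi < 0 ->
  exists c : R,
    (forall t, I t -> x t <= xstar xi /\
        cosh (y t - c) = cos (x t) / cos (xstar xi)) \/
    (forall t, I t -> PI - xstar xi <= x t /\
        cosh (y t - c) = cos (PI - x t) / cos (xstar xi)).
Proof.
  intros Hxi.
  set (k := cos (xstar xi)).
  assert (Hk : k = sqrt (1 + xi)).
  { unfold k, xstar. rewrite Rabs_left by lra.
    replace (1 - - xi) with (1 + xi) by ring.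
    apply cos_acos. pose proof (sqrt_pos (1 + xi)).
    pose proof (sqrt_le_1_alt (1 + xi) 1 ltac:(lra)) as Hle.
    rewrite sqrt_1 in Hle. lra. }
  assert (Hk0 : 0 < k) by (rewrite Hk; apply sqrt_lt_R0; lra).
  assert (Hkk : k * k = 1 + xi) by (rewrite Hk; apply sqrt_sqrt; lra).
  pose proof (acos_bound (sqrt (1 - Rabs xi))) as Hxs. fold (xstar xi) in Hxs.
  assert (HW : W <> 0) by (intros ->; lra).
  destruct (factor_pair W V 1 k Hk0 HW ltac:(lra))
    as (sg & c & Hsg & -> & ->).
  assert (Hcos : forall t, I t -> cos (x t) = sg * k * cosh (y t - c)).
  { intros t It. destruct (Hinv t It) as (_ & Hc & _).
    destruct (exp_shift_combination sg k c (y t)) as [Hsum _]. lra. }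
  exists c. destruct Hsg as [-> | ->]; [left | right]; intros t It;
    destruct (Hinv t It) as (Hx & _); specialize (Hcos t It);
    pose proof (cosh_ge_1 (y t - c)).
  - split; [apply le_of_cos_le; fold k; nra | rewrite Hcos; field; lra].
  - rewrite Rtrigo_facts.cos_pi_minus.
    split; [| rewrite Hcos; field; lra].
    enough (PI - x t <= xstar xi) by lra.
    apply le_of_cos_le; [lra | lra |]. rewrite Rtrigo_facts.cos_pi_minus.
    fold k. nra.
Qed.

Lemma sinh_orbit : xi < -1 ->
  exists (eps c : R), (eps = 1 \/ eps = -1) /\
    forall t, I t -> eps * px t < 0 /\
      eps * sinh (y t - c) = cos (x t) / sinh_theta xi.
Proof.
  intros Hxi.
  set (m := sinh_theta xi).
  assert (Hm : m = sqrt (- xi - 1))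
    by (unfold m, sinh_theta; rewrite Rabs_left by lra; reflexivity).
  assert (Hm0 : 0 < m) by (rewrite Hm; apply sqrt_lt_R0; lra).
  assert (Hmm : m * m = - xi - 1) by (rewrite Hm; apply sqrt_sqrt; lra).
  assert (HW : W <> 0) by (intros ->; lra).
  destruct (factor_pair W V (-1) m Hm0 HW ltac:(lra))
    as (sg & c & Hsg & -> & ->).
  exists sg, c. split; [exact Hsg |]. intros t It.
  destruct (Hinv t It) as (Hx & Hc & HsP).
  destruct (exp_shift_combination sg m c (y t)) as [Hsum Hdiff].
  assert (Hs : 0 < sin (x t)) by (apply sin_gt_0; lra).
  assert (HsP' : sin (x t) * px t = - sg * m * cosh (y t - c)) by lra.
  assert (Hc' : cos (x t) = sg * m * sinh (y t - c)) by lra.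
  pose proof (cosh_ge_1 (y t - c)).
  split.
  - destruct Hsg as [-> | ->]; nra.
  - rewrite Hc'. destruct Hsg as [-> | ->]; field; lra.
Qed.

Lemma exp_orbit : xi = -1 ->
  (forall t, I t -> x t = PI / 2) \/
  exists (eps c : R), (eps = 1 \/ eps = -1) /\
    forall t, I t -> x t <> PI / 2 /\ eps * px t * cos (x t) < 0 /\
      exp (eps * (y t - c)) = Rabs (cos (x t)).
Proof.
  intros Hxi. subst xi.
  destruct (Req_dec W 0) as [HW | HW]; destruct (Req_dec V 0) as [HV | HV].
  - left. intros t It. destruct (Hinv t It) as (Hx & Hc & _).
    rewrite HW, HV in Hc.
    apply cos_inj; [lra | pose proof PI_RGT_0; lra | rewrite cos_PI2; lra].
  - right. destruct (factor_pair V W 0 2 ltac:(lra) HV ltac:(lra))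
      as (sg & c & Hsg & HVe & _).
    exists (-1), (- c). split; [right; reflexivity |]. intros t It.
    destruct (Hinv t It) as (Hx & Hc & HsP).
    apply (exp_orbit_point (-1) sg); [lra | ring | exact Hsg | |].
    + replace (-1 * (y t - - c)) with (- c + - y t) by ring.
      rewrite exp_plus. rewrite HW, HVe in Hc. lra.
    + rewrite HW in Hc, HsP. lra.
  - right. destruct (factor_pair W V 0 2 ltac:(lra) HW ltac:(lra))
      as (sg & c & Hsg & HWe & _).
    exists 1, c. split; [left; reflexivity |]. intros t It.
    destruct (Hinv t It) as (Hx & Hc & HsP).
    apply (exp_orbit_point 1 sg); [lra | ring | exact Hsg | |].
    + replace (1 * (y t - c)) with (- c + y t) by ring.
      rewrite exp_plus. rewrite HV, HWe in Hc. lra.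
    + rewrite HV in Hc, HsP. lra.
  - exfalso. destruct (Rmult_integral W V ltac:(lra)); auto.
Qed.

End Orbits.

Theorem proposition3 (rho xi : R) (I : R -> Prop) (x y px py : R -> R) :
  0 < rho < 1 ->
  trajectory rho xi I x y px py ->
  (* (a) *)
  ((-1 < xi < 0) ->
    exists c : R,
      (forall t, I t -> x t <= xstar xi /\
          cosh (y t - c) = cos (x t) / cos (xstar xi)) \/
      (forall t, I t -> PI - xstar xi <= x t /\
          cosh (y t - c) = cos (PI - x t) / cos (xstar xi))) /\
  (* (b) *)
  (xi < -1 ->
    exists (eps c : R), (eps = 1 \/ eps = -1) /\
      forall t, I t -> eps * px t < 0 /\
        eps * sinh (y t - c) = cos (x t) / sinh_theta xi) /\
  (* (c) *)
  (xi = -1 ->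
    (forall t, I t -> x t = PI / 2) \/
    exists (eps c : R), (eps = 1 \/ eps = -1) /\
      forall t, I t -> x t <> PI / 2 /\ eps * px t * cos (x t) < 0 /\
        exp (eps * (y t - c)) = Rabs (cos (x t))).
Proof.
  intros Hrho Htraj.
  destruct (trajectory_invariants rho xi I x y px py Hrho Htraj)
    as (W & V & HWV & Hinv).
  split; [| split].
  - exact (cosh_orbit xi W V I x y px HWV Hinv).
  - exact (sinh_orbit xi W V I x y px HWV Hinv).
  - exact (exp_orbit xi W V I x y px HWV Hinv).
Qed.
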